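(* Let $p$ be a full-support skill distribution, and let $q_I,q_J$ be full-support perceptions. Let $\langle S_I,\pi_I\rangle$ and $\langle S_J,\pi_J\rangle$ be signal structures. Assume: - $\langle S_I,\pi_I\rangle$ is MLR; - $p\succsim_{LR}q_J$; - $q_I\succsim_{LR}q_J$; - $\langle S_I,\pi_I\rangle\succsim_G\langle S_J,\pi_J\rangle$. Then for every monotone firm $A\subset\mathcal{A}_M$, $$W_A(p,q_I,\langle S_I,\pi_I\rangle)\ \ge\ W_A(p,q_J,\langle S_J,\pi_J\rangle).$$
   Context: Let $\Theta\subset\mathbb{R}$ be a finite set of skill types with $|\Theta|\ge2$. Tasks are vectors $a\in\mathcal{A}:=\mathbb{R}^\Theta$. A firm is a non-empty finite set $A\subset\mathcal{A}$. It is monotone if $A\subset\mathcal{A}_M:=\{a: a(\theta')>a(\theta)\text{ whenever }\theta'>\theta\}$. A signal structure $\langle S,\pi\rangle$ consists of a non-empty finite set $S$ and a map $\pi:S\times\Theta\to[0,1]$ with $\sum_s\pi(s|\theta)=1$, such that each $s$ has $\pi(s|\theta)>0$ for some $\theta$. Pay: - $p,q\in\Delta(\Theta)$ have full support. - $q_{\langle S,\pi\rangle}(\theta|s):=q(\theta)\pi(s|\theta)/\sum_{\theta'}q(\theta')\pi(s|\theta')$. - $w_A(s,q,\langle S,\pi\rangle):=\max_{a\in A}\sum_\theta q_{\langle S,\pi\rangle}(\theta|s)a(\theta)$. - $W_A(p,q,\langle S,\pi\rangle):=\sum_\theta p(\theta)\sum_s\pi(s|\theta)w_A(s,q,\langle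 S,\pi\rangle)$. Orders: - $q'\succsim_{LR}q$ means $q(\theta)q'(\theta')\ge q(\theta')q'(\theta)$ whenever $\theta'>\theta$. - $\langle S',\pi'\rangle\succsim_G\langle S,\pi\rangle$ means there exists $g:S\times S'\to[0,1]$ with $\sum_s g(s|s')=1$ for each $s'$ and $\pi(s|\theta)=\sum_{s'}g(s|s')\pi'(s'|\theta)$ for all $s,\theta$. - $\langle S,\pi\rangle$ is MLR if $S\subset\mathbb{R}$ and $\pi(s|\theta)\pi(s'|\theta')\ge\pi(s|\theta')\pi(s'|\theta)$ whenever $s'>s$, $\theta'>\theta$. *)

From HB Require Import structures.
From mathcomp Require Import all_boot all_order all_algebra.
From mathcomp Require Import finmap.
From mathcomp Require Import reals.
Set Implicit Arguments. Unset Strict Implicit. Unset Printing Implicit Defensive.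
Import Order.TTheory GRing.Theory Num.Theory.
Local Open Scope ring_scope.
Local Open Scope fset_scope.

(* Skill types: a finite type T together with an injective labelling
   th : T -> R, so that Theta = image of th is a finite subset of R and
   the order on types is the order of their labels. *)

Section Defs.
Variable R : realType.
Variables (T : finType) (th : T -> R).

Definition full_support_dist (p : T -> R) : Prop :=
  (forall t, 0 < p t) /\ \sum_(t : T) p t = 1.

Definition signal_structure (S : finType) (pi : S -> T -> R) : Prop :=
  (0 < #|S|)%N /\
  (forall s t, 0 <= pi s t <= 1) /\
  (forall t, \sum_(s : S) pi s t = 1) /\
  (forall s, exists t, 0 < pi s t).

Definition posterior (S : finType) (q : T -> R) (pi : S -> T -> R)
    (s : S) (t : T) : R :=
  q t * pi s t / \sum_(t' : T) q t' * pi s t'.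

Definition post_val (S : finType) (q : T -> R) (pi : S -> T -> R)
    (s : S) (a : {ffun T -> R}) : R :=
  \sum_(t : T) posterior q pi s t * a t.

Definition wage (A : {fset {ffun T -> R}}) (S : finType) (q : T -> R)
    (pi : S -> T -> R) (s : S) : R :=
  \big[Num.max/post_val q pi s (head [ffun=> 0] (enum_fset A))]_(a <- enum_fset A)
     post_val q pi s a.

Definition Wpay (A : {fset {ffun T -> R}}) (p q : T -> R) (S : finType)
    (pi : S -> T -> R) : R :=
  \sum_(t : T) p t * \sum_(s : S) pi s t * wage A q pi s.

Definition monotone_task (a : {ffun T -> R}) : Prop :=
  forall t t', th t < th t' -> a t < a t'.

Definition LR_ge (q' q : T -> R) : Prop :=
  forall t t', th t < th t' -> q t * q' t' >= q t' * q' t.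

Definition garbling_ge (S' : finType) (pi' : S' -> T -> R)
    (S : finType) (pi : S -> T -> R) : Prop :=
  exists g : S -> S' -> R,
    (forall s s', 0 <= g s s' <= 1) /\
    (forall s', \sum_(s : S) g s s' = 1) /\
    (forall s t, pi s t = \sum_(s' : S') g s s' * pi' s' t).

Definition MLR (S : finType) (sl : S -> R) (pi : S -> T -> R) : Prop :=
  injective sl /\
  forall s s' t t', sl s < sl s' -> th t < th t' ->
    pi s t * pi s' t' >= pi s t' * pi s' t.

End Defs.

(* Split the comparison through the pay W_A(p, q_J, <S_I,pi_I>).
   Replacing q_J by q_I raises every posterior in the likelihood-ratio order,
   hence the expected value of every monotone task, hence every wage.
   Replacing <S_J,pi_J> by the finer <S_I,pi_I>: a J-wage is at most the
   average of the I-wages under the perceived weights (Blackwell); the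
   MLR property makes the I-wages increasing in the signal, and p >=_LR q_J
   makes the true signal weights likelihood-ratio dominate the perceived
   ones, so averaging under the true weights only raises the pay.
   Every likelihood-ratio comparison is an instance of one discrete
   Chebyshev inequality for two likelihood-ratio ordered pairs. *)

From HB Require Import structures.
From mathcomp Require Import all_boot all_order all_algebra.
From mathcomp Require Import finmap.
From mathcomp Require Import reals.
From mathcomp Require Import ring.
Import Order.TTheory GRing.Theory Num.Theory.
Local Open Scope ring_scope.

Set Implicit Arguments. Unset Strict Implicit. Unset Printing Implicit Defensive.

Section LikelihoodRatio.
Variables (R : realType) (X : finType) (k : X -> R).
Hypothesis k_inj : injective k.

Lemma sum_pairs_ge0 (F : X -> X -> R) :
  (forall x, 0 <= F x x) -> (forall x y, k x < k y -> 0 <= F x y + F y x) ->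
  0 <= \sum_x \sum_y F x y.
Proof.
move=> F_diag F_pair.
have sym_ge0 : 0 <= \sum_x \sum_y (F x y + F y x).
  apply: sumr_ge0 => x _; apply: sumr_ge0 => y _.
  case: (ltgtP (k x) (k y)) => [xy|yx|/k_inj->]; first exact: F_pair.
    by rewrite addrC; apply: F_pair.
  by apply: addr_ge0.
have double : \sum_x \sum_y (F x y + F y x) = (\sum_x \sum_y F x y) *+ 2.
  under eq_bigr do rewrite big_split.
  by rewrite big_split /= [X in _ + X]exchange_big mulr2n.
by rewrite double pmulrn_lge0 in sym_ge0.
Qed.

Lemma LR_ge_refl (a : X -> R) : LR_ge k a a.
Proof. by move=> x y _; rewrite mulrC. Qed.

Lemma LR_geM (a a' b b' : X -> R) :
  (forall x, 0 <= a x) -> (forall x, 0 <= a' x) ->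
  (forall x, 0 <= b x) -> (forall x, 0 <= b' x) ->
  LR_ge k a' a -> LR_ge k b' b ->
  LR_ge k (fun x => a' x * b' x) (fun x => a x * b x).
Proof.
move=> a0 a'0 b0 b'0 LRa LRb x y xy.
rewrite mulrACA [X in _ <= X]mulrACA.
by apply: ler_pM; rewrite ?mulr_ge0 ?LRa ?LRb.
Qed.

(* Symmetrizing, each pair x, y contributes the product of the two 2x2
   likelihood-ratio determinants, and both are nonnegative. *)
Lemma LR_ge_sum_cross (a a' b b' : X -> R) : LR_ge k a' a -> LR_ge k b' b ->
  (\sum_x b' x * a x) * (\sum_x b x * a' x) <=
  (\sum_x b x * a x) * (\sum_x b' x * a' x).
Proof.
move=> LRa LRb; rewrite -subr_ge0 !big_distrlr /= -sumrB.
under eq_bigr do rewrite -sumrB.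
apply: sum_pairs_ge0 => [x|x y xy].
  by have -> : b x * a x * (b' x * a' x) - b' x * a x * (b x * a' x) = 0 by ring.
have -> : b x * a x * (b' y * a' y) - b' x * a x * (b y * a' y) +
          (b y * a y * (b' x * a' x) - b' y * a y * (b x * a' x)) =
          (a x * a' y - a y * a' x) * (b x * b' y - b y * b' x) by ring.
by apply: mulr_ge0; rewrite subr_ge0; [apply: LRa | apply: LRb].
Qed.

Lemma LR_ge_mean (mu nu f : X -> R) :
  LR_ge k nu mu -> (forall x y, k x < k y -> f x <= f y) ->
  0 < \sum_x mu x -> 0 < \sum_x nu x ->
  (\sum_x f x * mu x) / (\sum_x mu x) <= (\sum_x f x * nu x) / (\sum_x nu x).
Proof.
move=> LRmu f_mono mu_gt0 nu_gt0.
have f_LR : LR_ge k f (fun=> 1) by move=> x y xy; rewrite !mul1r f_mono.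
have := LR_ge_sum_cross LRmu f_LR.
rewrite !(eq_bigr _ (fun x _ => mul1r _)).
by rewrite ler_pdivrMr // mulrAC ler_pdivlMr // mulrC [X in _ <= X]mulrC.
Qed.

End LikelihoodRatio.

Section Pay.
Variables (R : realType) (T : finType).

Definition marginal (S : finType) (q : T -> R) (pi : S -> T -> R) (s : S) : R :=
  \sum_t q t * pi s t.

Lemma signal_structure_ge0 (S : finType) (pi : S -> T -> R) s t :
  signal_structure pi -> 0 <= pi s t.
Proof. by case=> _ [/(_ s t)/andP[]]. Qed.

Lemma marginal_gt0 (S : finType) (q : T -> R) (pi : S -> T -> R) (s : S) :
  signal_structure pi -> (forall t, 0 < q t) -> 0 < marginal q pi s.
Proof.
move=> [_ [pi01 [_ pi_pos]]] q_gt0; have [t0 pi_t0] := pi_pos s.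
rewrite /marginal (bigD1 t0) //= ltr_pwDl ?mulr_gt0 //.
apply: sumr_ge0 => t _; apply: mulr_ge0; first exact: ltW.
by case/andP: (pi01 s t).
Qed.

Lemma post_valE (S : finType) (q : T -> R) (pi : S -> T -> R) s a :
  post_val q pi s a = marginal (fun t => q t * a t) pi s / marginal q pi s.
Proof.
rewrite /post_val /posterior /marginal mulr_suml; apply: eq_bigr => t _.
by rewrite mulrAC [q t * a t * _]mulrAC.
Qed.

Lemma WpayE (A : {fset {ffun T -> R}}) (p q : T -> R) (S : finType) (pi : S -> T -> R) :
  Wpay A p q pi = \sum_s marginal p pi s * wage A q pi s.
Proof.
rewrite /Wpay; under eq_bigr do rewrite mulr_sumr.
rewrite exchange_big /=; apply: eq_bigr => s _.
by rewrite /marginal mulr_suml; apply: eq_bigr => t _; rewrite mulrA.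
Qed.

Lemma marginal_garbling (S S' : finType) (pi : S -> T -> R) (pi' : S' -> T -> R)
    (g : S -> S' -> R) (h : T -> R) s :
  (forall s t, pi s t = \sum_s' g s s' * pi' s' t) ->
  marginal h pi s = \sum_s' g s s' * marginal h pi' s'.
Proof.
move=> pi_garb; rewrite /marginal.
under eq_bigr do rewrite pi_garb mulr_sumr.
rewrite exchange_big /=; apply: eq_bigr => s' _.
by rewrite mulr_sumr; apply: eq_bigr => t _; rewrite mulrCA.
Qed.

Lemma wage_ge (A : {fset {ffun T -> R}}) (S : finType) q (pi : S -> T -> R) s a :
  a \in A -> post_val q pi s a <= wage A q pi s.
Proof. by move=> aA; apply: le_bigmax_seq. Qed.

(* The seed of the maximum is the first element of [enum_fset A], a junk value
   unless [A] is nonempty. *)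
Lemma wage_le (A : {fset {ffun T -> R}}) (S : finType) q (pi : S -> T -> R) s x :
  A != fset0 -> (forall a, a \in A -> post_val q pi s a <= x) -> wage A q pi s <= x.
Proof.
move=> /fset0Pn[a0 a0A] le_x; rewrite /wage big_seq.
apply: bigmax_le => [|a aA]; last exact: le_x.
apply: le_x; move: a0A.
change (a0 \in enum_fset A -> head [ffun=> 0] (enum_fset A) \in enum_fset A).
by case: (enum_fset A) => // a l _; apply: mem_head.
Qed.

End Pay.

Section MonotoneTasks.
Variables (R : realType) (T : finType) (th : T -> R).
Hypothesis th_inj : injective th.
Variable A : {fset {ffun T -> R}}.
Hypotheses (A_neq0 : A != fset0) (A_mono : forall a, a \in A -> monotone_task th a).

Lemma wage_le_LR (S S' : finType) (q q' : T -> R) (pi : S -> T -> R)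
    (pi' : S' -> T -> R) s s' :
  LR_ge th (fun t => q' t * pi' s' t) (fun t => q t * pi s t) ->
  0 < marginal q pi s -> 0 < marginal q' pi' s' ->
  wage A q pi s <= wage A q' pi' s'.
Proof.
move=> LR M_gt0 M'_gt0; apply: wage_le => // a aA.
apply: le_trans (wage_ge _ _ _ aA); rewrite !post_valE.
have marginalE (S0 : finType) (q0 : T -> R) (pi0 : S0 -> T -> R) s0 :
    marginal (fun t => q0 t * a t) pi0 s0 = \sum_t a t * (q0 t * pi0 s0 t).
  by apply: eq_bigr => t _; rewrite mulrAC mulrC.
rewrite !marginalE; apply: (LR_ge_mean th_inj) => // t t' tt'.
exact/ltW/A_mono.
Qed.

Lemma Wpay_perception_le (p q q' : T -> R) (S : finType) (pi : S -> T -> R) :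
  signal_structure pi -> (forall t, 0 < p t) -> (forall t, 0 < q t) ->
  (forall t, 0 < q' t) -> LR_ge th q' q ->
  Wpay A p q pi <= Wpay A p q' pi.
Proof.
move=> pi_sig p_gt0 q_gt0 q'_gt0 LRq; rewrite !WpayE; apply: ler_sum => s _.
apply: ler_wpM2l; first exact/ltW/marginal_gt0.
apply: wage_le_LR; rewrite ?marginal_gt0 //.
have pi_ge0 t : 0 <= pi s t by apply: signal_structure_ge0.
by apply: (LR_geM _ _ pi_ge0 pi_ge0 LRq (LR_ge_refl _)) => t; apply: ltW.
Qed.

Section Garbling.
Variables (S S' : finType) (sl' : S' -> R).
Variables (pi : S -> T -> R) (pi' : S' -> T -> R) (g : S -> S' -> R).
Hypotheses (pi_sig : signal_structure pi) (pi'_sig : signal_structure pi').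
Hypothesis pi'_MLR : MLR th sl' pi'.
Hypotheses (g_ge0 : forall s s', 0 <= g s s') (g_sum1 : forall s', \sum_s g s s' = 1).
Hypothesis pi_garb : forall s t, pi s t = \sum_s' g s s' * pi' s' t.

Lemma wage_MLR_mono (q : T -> R) s1 s2 :
  (forall t, 0 < q t) -> sl' s1 < sl' s2 -> wage A q pi' s1 <= wage A q pi' s2.
Proof.
move=> q_gt0 s12; apply: wage_le_LR; rewrite ?marginal_gt0 //.
have pi'_ge0 s t : 0 <= pi' s t by apply: signal_structure_ge0.
have q_ge0 t : 0 <= q t by apply: ltW.
apply: (LR_geM q_ge0 q_ge0 (pi'_ge0 s1) (pi'_ge0 s2) (LR_ge_refl _)).
by move=> t t'; apply: pi'_MLR.2.
Qed.

Lemma marginal_MLR_LR (p q : T -> R) :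
  LR_ge th p q -> LR_ge sl' (marginal p pi') (marginal q pi').
Proof.
move=> LRpq s1 s2 s12; rewrite mulrC.
exact: (LR_ge_sum_cross th_inj (fun t t' => pi'_MLR.2 s1 s2 t t' s12) LRpq).
Qed.

(* Blackwell: a posterior after a garbled signal is a mixture of the posteriors
   after the finer signals, and the wage is convex in the posterior. *)
Lemma wage_garbling_le (q : T -> R) s : (forall t, 0 < q t) ->
  wage A q pi s <=
  (\sum_s' wage A q pi' s' * (g s s' * marginal q pi' s'))
    / \sum_s' g s s' * marginal q pi' s'.
Proof.
move=> q_gt0; rewrite -(marginal_garbling _ _ pi_garb).
apply: wage_le => // a aA.
rewrite post_valE (marginal_garbling _ _ pi_garb) ler_pM2r ?invr_gt0 ?marginal_gt0 //.
apply: ler_sum => s' _; rewrite mulrCA; apply: ler_wpM2l => //.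
by rewrite -ler_pdivrMr ?marginal_gt0 // -post_valE wage_ge.
Qed.

Lemma Wpay_garbling_le (p q : T -> R) :
  (forall t, 0 < p t) -> (forall t, 0 < q t) -> LR_ge th p q ->
  Wpay A p q pi <= Wpay A p q pi'.
Proof.
move=> p_gt0 q_gt0 LRpq; rewrite !WpayE.
have -> : \sum_s' marginal p pi' s' * wage A q pi' s' =
          \sum_s \sum_s' wage A q pi' s' * (g s s' * marginal p pi' s').
  rewrite exchange_big; apply: eq_bigr => s' _ /=.
  by rewrite -mulr_sumr -mulr_suml g_sum1 mul1r mulrC.
apply: ler_sum => s _.
set mu := fun s' => g s s' * marginal q pi' s'.
set nu := fun s' => g s s' * marginal p pi' s'.
have P_eq : marginal p pi s = \sum_s' nu s' by apply: marginal_garbling.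
have P_gt0 : 0 < \sum_s' nu s' by rewrite -P_eq marginal_gt0.
have Q_gt0 : 0 < \sum_s' mu s'.
  by rewrite -(marginal_garbling _ _ pi_garb) marginal_gt0.
have LRnu : LR_ge sl' nu mu.
  apply: (LR_geM (g_ge0 s) (g_ge0 s) _ _ (LR_ge_refl _) (marginal_MLR_LR LRpq));
  by move=> s'; apply/ltW/marginal_gt0.
rewrite -[X in _ <= X](divfK (lt0r_neq0 P_gt0)) P_eq mulrC.
apply: ler_wpM2r; first exact: ltW.
apply: le_trans (wage_garbling_le s q_gt0) _.
by apply: (LR_ge_mean (proj1 pi'_MLR) LRnu (fun _ _ => wage_MLR_mono q_gt0)).
Qed.

End Garbling.
End MonotoneTasks.

Local Open Scope fset_scope.

Theorem corollary2 (R : realType) (T : finType) (th : T -> R)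
  (th_inj : injective th) (hT : (2 <= #|T|)%N)
  (p qI qJ : T -> R)
  (hp : full_support_dist p) (hqI : full_support_dist qI)
  (hqJ : full_support_dist qJ)
  (SI : finType) (slI : SI -> R) (piI : SI -> T -> R)
  (SJ : finType) (piJ : SJ -> T -> R)
  (hsI : signal_structure piI) (hsJ : signal_structure piJ)
  (hMLR : MLR th slI piI)
  (hpqJ : LR_ge th p qJ)
  (hqIJ : LR_ge th qI qJ)
  (hG : garbling_ge piI piJ) :
  forall A : {fset {ffun T -> R}},
    A != fset0 ->
    (forall a, a \in A -> monotone_task th a) ->
    Wpay A p qI piI >= Wpay A p qJ piJ.
Proof.
move=> A A_neq0 A_mono.
have [[p_gt0 _] [qI_gt0 _] [qJ_gt0 _]] := And3 hp hqI hqJ.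
have [g [g01 [g_sum1 piJ_garb]]] := hG.
have g_ge0 s s' : 0 <= g s s' by case/andP: (g01 s s').
apply: le_trans (Wpay_perception_le th_inj A_neq0 A_mono hsI p_gt0 qJ_gt0 qI_gt0 hqIJ).
exact: (Wpay_garbling_le th_inj A_neq0 A_mono hsJ hsI hMLR g_ge0 g_sum1 piJ_garb
          p_gt0 qJ_gt0 hpqJ).
Qed.
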